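(* Let $\mathcal{A}$ be an integral domain with field of fractions $\mathcal{F}$, let $\mathcal{Z}\subsetneq\mathcal{A}$ be a prime ideal, and let $\mathcal{P}=\{n/d\mid n\in\mathcal{A},\ d\in\mathcal{A}\setminus\mathcal{Z}\}$. Let $a,b,a',b'\in\mathcal{A}$ with $a'\neq0$, suppose $ab=a'b'$, and suppose $p=a/a'$ belongs to $\mathcal{P}$. If the pair $(a,b)$ is coprime over $\mathcal{A}$ (i.e. $xa+yb=1$ for some $x,y\in\mathcal{A}$), then the single-input single-output plant $p$ is stabilizable (whether or not $p$ has a coprime factorization over $\mathcal{A}$).
   Context: $\mathcal{A}$ is the ring of stable causal transfer functions, $\mathcal{F}$ its field of fractions, and elements of $\mathcal{P}$ are the causal transfer functions. For a single-input single-output plant $p\in\mathcal{F}$ and controller $c\in\mathcal{F}$ with $1+pc\neq0$, the closed-loop matrix is $H(p,c)=\begin{pmatrix}(1+pc)^{-1} & -p(1+pc)^{-1}\\ c(1+pc)^{-1} & (1+pc)^{-1}\end{pmatrix}$; $p$ is stabilizable if there exists $c\in\mathcal{F}$ with $1+pc\neq0$ such that all entries of $H(p,c)$ lie in $\mathcal{A}$. A coprime factorization of $p$ is $p=n/d$ with $n,d\in\mathcal{A}$, $d\neq0$, and $xn+yd=1$ for some $x,y\in\mathcal{A}$. *)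

From HB Require Import structures.
From mathcomp Require Import all_boot all_order all_algebra.
From mathcomp Require Import fraction ring_quotient.
Set Implicit Arguments. Unset Strict Implicit. Unset Printing Implicit Defensive.
Import GRing.Theory.
Local Open Scope ring_scope.

Notation "x %:F" := (@FracField.tofrac _ x).

Definition inA (R : idomainType) (x : {fraction R}) : Prop :=
  exists r : R, x = r%:F.

Definition inP (R : idomainType) (Z : {pred R}) (x : {fraction R}) : Prop :=
  exists n d : R, d \notin Z /\ x = n%:F / d%:F.

Definition Hcl (R : idomainType) (p c : {fraction R}) : 'M[{fraction R}]_2 :=
  \matrix_(i < 2, j < 2)
    if (i == 0) && (j == 0) then (1 + p * c)^-1
    else if (i == 0) then - p * (1 + p * c)^-1
    else if (j == 0) then c * (1 + p * c)^-1
    else (1 + p * c)^-1.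

Definition stabilizable (R : idomainType) (p : {fraction R}) : Prop :=
  exists c : {fraction R}, 1 + p * c != 0 /\ forall i j, inA (Hcl p c i j).

From HB Require Import structures.
From mathcomp Require Import all_boot all_order all_algebra.
From mathcomp Require Import fraction ring_quotient.
From mathcomp Require Import ring.
Import GRing.Theory.
Local Open Scope ring_scope.

(* Youla-style parametrization: a controller is determined by the entries
   s = (1 + pc)^-1 and t = c (1 + pc)^-1 of H(p,c), via c = t / s, so it
   suffices to find s != 0 and t in A with s + p t = 1 and p s in A.  For p = a / a' we take t = a' u, so that
   s = 1 - a u; when x a + y b = 1 the choice u = x gives s = y b and
   p s = y b' because a b = a' b'.  If y b = 0 then a is a unit and
   u = x (1 - a' x) gives s = a' x instead. *)

Section Stabilization.

Variable R : idomainType.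
Implicit Types (p c : {fraction R}) (a s t u w : R).

Lemma stabilizable_of_entries p c s0 s1 s2 :
  1 + p * c != 0 ->
  (1 + p * c)^-1 = s0%:F -> - p * (1 + p * c)^-1 = s1%:F ->
  c * (1 + p * c)^-1 = s2%:F -> stabilizable p.
Proof.
move=> pc_neq0 H00 H01 H10; exists c; split => // i j; rewrite /Hcl mxE.
case: i => [[|[|//]] ?]; case: j => [[|[|//]] ?] /=.
- by exists s0.
- by exists s1.
- by exists s2.
- by exists s0.
Qed.

Lemma stabilizable_of_sensitivity p s t w :
  s != 0 -> s%:F + p * t%:F = 1 -> p * s%:F = w%:F -> stabilizable p.
Proof.
move=> s_neq0 sens ps_eq.
have Fs_neq0 : s%:F != 0 by rewrite tofrac_eq0.
have inv_sens : 1 + p * (t%:F / s%:F) = s%:F^-1.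
  by rewrite -[1](divff Fs_neq0) mulrA -mulrDl sens mul1r.
apply: (@stabilizable_of_entries _ (t%:F / s%:F) s (- w) t).
- by rewrite inv_sens invr_eq0.
- by rewrite inv_sens invrK.
- by rewrite inv_sens invrK mulNr ps_eq raddfN.
- by rewrite inv_sens invrK mulfVK.
Qed.

Lemma stabilizable_ratio a (a' : R) u w :
  a' != 0 -> 1 - a * u != 0 -> a * (1 - a * u) = a' * w ->
  stabilizable (a%:F / a'%:F).
Proof.
move=> a'_neq0 s_neq0 as_eq.
have Fa'_neq0 : a'%:F != 0 by rewrite tofrac_eq0.
apply: (@stabilizable_of_sensitivity _ (1 - a * u) (a' * u) w s_neq0).
- by rewrite rmorphB rmorph1 !rmorphM mulrA divfK // subrK.
- by rewrite mulrAC -rmorphM as_eq /= rmorphM mulrAC divff // mul1r.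
Qed.

End Stabilization.

Theorem proposition2 (R : idomainType) (Z : {pred R})
    (HZideal : idealr_closed Z) (HZprime : prime_idealr_closed Z)
    (a b a' b' : R) (Ha' : a' != 0) (Hab : a * b = a' * b')
    (HpP : inP Z (a%:F / a'%:F))
    (Hcop : exists x y : R, x * a + y * b = 1) :
  stabilizable (a%:F / a'%:F).
Proof.
have [x [y Hxy]] := Hcop.
have [yb_eq0|yb_neq0] := eqVneq (y * b) 0.
  have xa_eq1 : x * a = 1 by rewrite -Hxy yb_eq0 addr0.
  have x_neq0 : x != 0.
    by apply: contra_eq_neq xa_eq1 => ->; rewrite mul0r eq_sym oner_neq0.
  have s_eq : 1 - a * (x * (1 - a' * x)) = a' * x.
    by rewrite mulrA [a * x]mulrC xa_eq1; ring.
  apply: (@stabilizable_ratio _ a a' (x * (1 - a' * x)) 1 Ha'); rewrite s_eq ?mulf_neq0 //.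
  by rewrite mulrCA [a * x]mulrC xa_eq1.
have s_eq : 1 - a * x = y * b by rewrite -Hxy; ring.
apply: (@stabilizable_ratio _ a a' x (y * b') Ha'); rewrite s_eq //.
by rewrite mulrCA Hab mulrCA.
Qed.
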